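(* Let $\epsilon>0$, $\gamma>0$ and $k\ge 2$. For $B=(B^1,\dots,B^k)\in\mathbb R^k$ and $a\in[-1,1]$ define $$F_B(a)=\sum_{\substack{i,j\in\{1,\dots,k\}\\ i\neq j}}\exp\Bigl(-\frac{\epsilon\,|B^i-B^j+\gamma a|}{2\gamma}\Bigr).$$ Then $$\sup_{B\in\mathbb R^k,\ a,a'\in[-1,1]}\frac{F_B(a)}{F_B(a')}=e^{\epsilon/2},$$ with the supremum attained when $B^1=\dots=B^k$, $a=0$ and $a'\in\{-1,1\}$. Hence, defining $\epsilon_2=\ln\sup_{B,a,a'}F_B(a)/F_B(a')$, one has $\epsilon_2=\epsilon/2$, and the expected privacy loss against adversary II, $\frac1k\cdot 0+\frac{k-1}{k}\,\epsilon_2$, equals $\frac{k-1}{k}\cdot\frac{\epsilon}{2}$.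
   Context: Setting: a client holds a private value $a\in[-1,1]$ (a clipped average gradient coordinate) and, given a model weight $B^{\mathrm{pre}}$, returns $B^{\mathrm{pre}}-\gamma a+L$ where $L$ is Laplace noise with mean $0$ and scale $2\gamma/\epsilon$ (density proportional to $\exp(-\epsilon|x|/(2\gamma))$); this alone gives $\epsilon$-differential privacy. The server holds $k$ model instances; the instance sent to the client (the pre-image) is uniformly random and the returned model overwrites a uniformly random instance. Adversary II sees the $k$ instances $B^1,\dots,B^k$ right after the update but not which instance was the pre-image nor which was the returned one. With probability $1/k$ the returned model overwrote its own pre-image, in which case the privacy loss is taken to be $0$; with probability $(k-1)/k$ both the pre-image and the returned model are among the $k$ observed instances, each ordered pair (returned $=B^i$, pre-image $=B^j$), $i\ne j$, being equally likely, so that the likelihood of the observation given $a$ is proportional to $F_B(a)$, and the privacy loss in this case is $\epsilon_2$. The expected privacy loss is the average of these two losses weighted by their probabilities. *)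

From Stdlib Require Import Reals Lra.
Open Scope R_scope.

Fixpoint rsum (n : nat) (f : nat -> R) : R :=
  match n with
  | O => 0
  | S m => rsum m f + f m
  end.

Definition F (eps gamma : R) (k : nat) (B : nat -> R) (a : R) : R :=
  rsum k (fun i => rsum k (fun j =>
    if Nat.eqb i j then 0
    else exp (- (eps * Rabs (B i - B j + gamma * a)) / (2 * gamma)))).

Definition ratio_set (eps gamma : R) (k : nat) : R -> Prop :=
  fun r => exists (B : nat -> R) (a a' : R),
    -1 <= a <= 1 /\ -1 <= a' <= 1 /\ r = F eps gamma k B a / F eps gamma k B a'.

Definition expected_loss (k : nat) (eps2 : R) : R :=
  / INR k * 0 + (INR k - 1) / INR k * eps2.

(* Swapping i and j pairs the terms of F_B(a) as g_D(x) := e^{-|D + x|} + e^{-|D - x|},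
   with D = eps (B^i - B^j) / (2 gamma) and x = eps a / 2.  Since g_D is even we may
   assume that x and y have the same sign, so |x - y| <= eps / 2, and the reverse
   triangle inequality |D + y| <= |D + x| + |x - y| bounds each term of g_D(x) by
   e^{eps/2} times the corresponding term of g_D(y).  Hence F_B(a) <= e^{eps/2} F_B(a'),
   with equality for constant B, a = 0 and |a'| = 1, where F_B(a) is proportional to
   e^{-eps |a| / 2}. *)
From Stdlib Require Import Reals Lra Lia.
Open Scope R_scope.

Lemma exp_le (x y : R) : x <= y -> exp x <= exp y.
Proof.
  intros Hxy; destruct (Req_dec x y) as [-> | Hne]; [lra |].
  left; apply exp_increasing; lra.
Qed.

Lemma exp_neg_abs_le_shift (u v : R) : exp (- Rabs u) <= exp (Rabs (u - v)) * exp (- Rabs v).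
Proof.
  rewrite <- exp_plus; apply exp_le.
  pose proof (Rabs_triang_inv v u); rewrite (Rabs_minus_sym u v); lra.
Qed.

Definition abs_pair_sum (D x : R) : R := exp (- Rabs (D + x)) + exp (- Rabs (D - x)).

Lemma abs_pair_sum_opp (D x : R) : abs_pair_sum D (- x) = abs_pair_sum D x.
Proof.
  unfold abs_pair_sum; replace (D + - x) with (D - x) by ring.
  replace (D - - x) with (D + x) by ring; lra.
Qed.

Lemma abs_pair_sum_le_shift (D x y : R) :
  abs_pair_sum D x <= exp (Rabs (x - y)) * abs_pair_sum D y.
Proof.
  unfold abs_pair_sum; rewrite Rmult_plus_distr_l.
  apply Rplus_le_compat.
  - replace (x - y) with ((D + x) - (D + y)) by ring; apply exp_neg_abs_le_shift.
  - rewrite (Rabs_minus_sym x y); replace (y - x) with ((D - x) - (D - y)) by ring.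
    apply exp_neg_abs_le_shift.
Qed.

Lemma Rabs_sub_or_add_le (x y t : R) :
  Rabs x <= t -> Rabs y <= t -> Rabs (x - y) <= t \/ Rabs (x - - y) <= t.
Proof.
  intros Hx Hy.
  destruct (Rle_dec 0 x), (Rle_dec 0 y); [left | right | right | left];
    unfold Rabs in *; repeat destruct Rcase_abs; lra.
Qed.

Lemma abs_pair_sum_le (D x y t : R) : Rabs x <= t -> Rabs y <= t ->
  abs_pair_sum D x <= exp t * abs_pair_sum D y.
Proof.
  intros Hx Hy.
  assert (Hshift : forall z, Rabs (x - z) <= t ->
            abs_pair_sum D x <= exp t * abs_pair_sum D z).
  { intros z Hz; eapply Rle_trans; [apply abs_pair_sum_le_shift |].
    apply Rmult_le_compat_r; [| now apply exp_le].
    apply Rlt_le, Rplus_lt_0_compat; apply exp_pos. }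
  destruct (Rabs_sub_or_add_le x y t Hx Hy) as [Hle | Hle].
  - now apply Hshift.
  - rewrite <- (abs_pair_sum_opp D y); now apply Hshift.
Qed.

Lemma rsum_ext (n : nat) (f g : nat -> R) :
  (forall i, (i < n)%nat -> f i = g i) -> rsum n f = rsum n g.
Proof.
  induction n as [| n IH]; simpl; intros H; [reflexivity |].
  rewrite IH, H; [reflexivity | lia | intros; apply H; lia].
Qed.

Lemma rsum_plus (n : nat) (f g : nat -> R) :
  rsum n (fun i => f i + g i) = rsum n f + rsum n g.
Proof. induction n as [| n IH]; simpl; [lra |]. rewrite IH; lra. Qed.

Lemma rsum_scal (n : nat) (c : R) (f : nat -> R) :
  rsum n (fun i => c * f i) = c * rsum n f.
Proof. induction n as [| n IH]; simpl; [lra |]. rewrite IH; lra. Qed.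

Lemma rsum_le (n : nat) (f g : nat -> R) :
  (forall i, (i < n)%nat -> f i <= g i) -> rsum n f <= rsum n g.
Proof.
  induction n as [| n IH]; simpl; intros H; [lra |].
  apply Rplus_le_compat; [apply IH; intros; apply H | apply H]; lia.
Qed.

Lemma rsum_swap (n m : nat) (f : nat -> nat -> R) :
  rsum n (fun i => rsum m (fun j => f i j)) = rsum m (fun j => rsum n (fun i => f i j)).
Proof.
  induction n as [| n IH]; simpl.
  - clear f; induction m; simpl; lra.
  - now rewrite IH, <- rsum_plus.
Qed.

Lemma rsum_nonneg (n : nat) (f : nat -> R) :
  (forall i, (i < n)%nat -> 0 <= f i) -> 0 <= rsum n f.
Proof.
  induction n as [| n IH]; simpl; intros H; [lra |].
  assert (0 <= rsum n f) by (apply IH; intros; apply H; lia).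
  assert (0 <= f n) by (apply H; lia); lra.
Qed.

Lemma rsum_ge_term (n m : nat) (f : nat -> R) :
  (forall i, (i < n)%nat -> 0 <= f i) -> (m < n)%nat -> f m <= rsum n f.
Proof.
  induction n as [| n IH]; intros H Hm; [lia |]; simpl.
  assert (0 <= f n) by (apply H; lia).
  destruct (Nat.eq_dec m n) as [-> | Hne].
  - assert (0 <= rsum n f) by (apply rsum_nonneg; intros; apply H; lia); lra.
  - assert (f m <= rsum n f) by (apply IH; [intros; apply H | ]; lia); lra.
Qed.

Lemma rsum_double_sym (n : nat) (f : nat -> nat -> R) :
  2 * rsum n (fun i => rsum n (fun j => f i j)) =
  rsum n (fun i => rsum n (fun j => f i j + f j i)).
Proof.
  rewrite (rsum_ext n (fun i => rsum n (fun j => f i j + f j i))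
             (fun i => rsum n (fun j => f i j) + rsum n (fun j => f j i)))
    by (intros; apply rsum_plus).
  rewrite rsum_plus, (rsum_swap n n (fun j i => f i j)); lra.
Qed.

Section Ratio.

Variables eps gamma : R.
Hypothesis eps_gt0 : 0 < eps.
Hypothesis gamma_gt0 : 0 < gamma.

Definition F_weight (B : nat -> R) (a : R) (i j : nat) : R :=
  if Nat.eqb i j then 0
  else exp (- (eps * Rabs (B i - B j + gamma * a)) / (2 * gamma)).

Lemma F_weightE (k : nat) (B : nat -> R) (a : R) :
  F eps gamma k B a = rsum k (fun i => rsum k (fun j => F_weight B a i j)).
Proof. reflexivity. Qed.

Lemma F_weight_nonneg (B : nat -> R) (a : R) (i j : nat) : 0 <= F_weight B a i j.
Proof. unfold F_weight; destruct (Nat.eqb i j); [lra | apply Rlt_le, exp_pos]. Qed.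

Lemma exp_scaled_abs (z : R) :
  exp (- (eps * Rabs z) / (2 * gamma)) = exp (- Rabs (eps / (2 * gamma) * z)).
Proof.
  f_equal; rewrite Rabs_mult, (Rabs_pos_eq (eps / (2 * gamma))).
  - field; lra.
  - apply Rlt_le, Rdiv_lt_0_compat; lra.
Qed.

Lemma F_weight_pairE (B : nat -> R) (a : R) (i j : nat) : i <> j ->
  F_weight B a i j + F_weight B a j i =
  abs_pair_sum (eps / (2 * gamma) * (B i - B j)) (eps / 2 * a).
Proof.
  intros Hij; unfold F_weight, abs_pair_sum.
  rewrite (Nat.eqb_sym j i), (proj2 (Nat.eqb_neq i j) Hij), !exp_scaled_abs.
  rewrite <- (Rabs_Ropp (eps / (2 * gamma) * (B j - B i + gamma * a))).
  do 2 f_equal; f_equal; f_equal; field; lra.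
Qed.

Lemma F_weight_pair_le (B : nat -> R) (a a' : R) (i j : nat) :
  -1 <= a <= 1 -> -1 <= a' <= 1 ->
  F_weight B a i j + F_weight B a j i <=
  exp (eps / 2) * (F_weight B a' i j + F_weight B a' j i).
Proof.
  intros Ha Ha'; destruct (Nat.eq_dec i j) as [-> | Hij].
  - unfold F_weight; rewrite Nat.eqb_refl; lra.
  - rewrite !F_weight_pairE by exact Hij.
    apply abs_pair_sum_le; rewrite Rabs_mult, Rabs_pos_eq by lra;
      [apply Rabs_le in Ha | apply Rabs_le in Ha']; nra.
Qed.

Lemma F_le (k : nat) (B : nat -> R) (a a' : R) : -1 <= a <= 1 -> -1 <= a' <= 1 ->
  F eps gamma k B a <= exp (eps / 2) * F eps gamma k B a'.
Proof.
  intros Ha Ha'.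
  enough (2 * F eps gamma k B a <= exp (eps / 2) * (2 * F eps gamma k B a')) by lra.
  rewrite !F_weightE, !rsum_double_sym, <- rsum_scal.
  apply rsum_le; intros i _; rewrite <- rsum_scal.
  apply rsum_le; intros j _; now apply F_weight_pair_le.
Qed.

Lemma F_pos (k : nat) (B : nat -> R) (a : R) : (2 <= k)%nat -> 0 < F eps gamma k B a.
Proof.
  intros Hk; rewrite F_weightE.
  assert (Hrow : forall i, 0 <= rsum k (fun j => F_weight B a i j))
    by (intros; apply rsum_nonneg; intros; apply F_weight_nonneg).
  apply Rlt_le_trans with (F_weight B a 0 1); [apply exp_pos |].
  apply Rle_trans with (rsum k (fun j => F_weight B a 0 j)).
  - apply (rsum_ge_term k 1 (fun j => F_weight B a 0 j)); [intros; apply F_weight_nonneg | lia].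
  - apply (rsum_ge_term k 0 (fun i => rsum k (fun j => F_weight B a i j)));
      [intros; apply Hrow | lia].
Qed.

Lemma F_const (k : nat) (B : nat -> R) (a : R) : (forall i j, B i = B j) ->
  F eps gamma k B a = exp (- (eps / 2 * Rabs a)) * F eps gamma k B 0.
Proof.
  intros HB; rewrite !F_weightE, <- rsum_scal.
  apply rsum_ext; intros i _; rewrite <- rsum_scal.
  apply rsum_ext; intros j _; unfold F_weight.
  destruct (Nat.eqb i j); [lra |].
  rewrite (HB i j), <- exp_plus; f_equal.
  replace (B j - B j + gamma * a) with (gamma * a) by ring.
  replace (B j - B j + gamma * 0) with 0 by ring.
  rewrite Rabs_R0, Rabs_mult, (Rabs_pos_eq gamma) by lra; field; lra.
Qed.

Lemma F_const_ratio (k : nat) (B : nat -> R) (a' : R) : (2 <= k)%nat ->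
  (forall i j, B i = B j) -> (a' = -1 \/ a' = 1) ->
  F eps gamma k B 0 / F eps gamma k B a' = exp (eps / 2).
Proof.
  intros Hk HB Ha'.
  pose proof (F_pos k B 0 Hk) as HF0.
  assert (Rabs a' = 1) as Habs by (destruct Ha' as [-> | ->]; unfold Rabs; destruct Rcase_abs; lra).
  rewrite (F_const k B a' HB), Habs, Rmult_1_r, exp_Ropp.
  pose proof (exp_pos (eps / 2)); field; lra.
Qed.

Lemma ratio_set_lub (k : nat) : (2 <= k)%nat ->
  is_lub (ratio_set eps gamma k) (exp (eps / 2)).
Proof.
  intros Hk; split.
  - intros r (B & a & a' & Ha & Ha' & ->).
    pose proof (F_pos k B a' Hk).
    apply Rmult_le_reg_r with (F eps gamma k B a'); [assumption |].
    unfold Rdiv; rewrite Rmult_assoc, Rinv_l, Rmult_1_r by lra.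
    now apply F_le.
  - intros b Hb; apply Hb.
    exists (fun _ => 0), 0, 1; repeat split; try lra.
    symmetry; apply F_const_ratio; auto.
Qed.

End Ratio.

Theorem lemma1 (eps gamma : R) (k : nat) :
  0 < eps -> 0 < gamma -> (2 <= k)%nat ->
  is_lub (ratio_set eps gamma k) (exp (eps / 2)) /\
  (forall (B : nat -> R) (a' : R), (forall i j, B i = B j) ->
     (a' = -1 \/ a' = 1) ->
     F eps gamma k B 0 / F eps gamma k B a' = exp (eps / 2)) /\
  (forall s : R, is_lub (ratio_set eps gamma k) s ->
     ln s = eps / 2 /\
     expected_loss k (ln s) = (INR k - 1) / INR k * (eps / 2)).
Proof.
  intros Heps Hgamma Hk.
  pose proof (ratio_set_lub eps gamma Heps Hgamma k Hk) as Hlub.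
  split; [exact Hlub |]; split.
  - intros B a' HB Ha'; now apply F_const_ratio.
  - intros s Hs; rewrite (is_lub_u _ _ _ Hs Hlub), ln_exp.
    split; [reflexivity |]; unfold expected_loss; ring.
Qed.
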